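(* Let $\Bbbk$ be a field, let $M$ be an $n\times m$ integer matrix of rank $m$, and let $I(M)=\langle x^{\mu_+}-x^{\mu_-}\mid \mu \text{ a column of } M\rangle\subseteq\Bbbk[x_1,\dots,x_n]$. Let $\tau\subseteq\{1,\dots,n\}$ and $P=\mathbb{N}^\tau\times\mathbb{Z}^{\bar\tau}$. Then $u,v\in P$ are connected in $\mathscr{G}_P(\Bbbk[P]\cdot I(M))$ if and only if they are connected in $G_P(M)$.
   Context: For $\mu\in\mathbb{Z}^n$, $(\mu_+)_k=\max(\mu_k,0)$ and $(\mu_-)_k=\max(-\mu_k,0)$. $\bar\tau=\{1,\dots,n\}\setminus\tau$; $P=\mathbb{N}^\tau\times\mathbb{Z}^{\bar\tau}=\{u\in\mathbb{Z}^n\mid u_i\ge 0 \text{ for } i\in\tau\}$, with monoid ring $\Bbbk[P]=\Bbbk[x_j^{\pm1}\mid j\notin\tau][x_i\mid i\in\tau]$. For $Q\subseteq\mathbb{Z}^n$, the graph $G_Q(M)$ has vertex set $Q$, with $u,v$ adjacent iff $u-v$ or $v-u$ is a column of $M$. For a binomial ideal $I\subseteq\Bbbk[P]$, the graph $\mathscr{G}_P(I)$ has vertex set $P$ and an edge between $u,v\in P$ iff $x^u-\rho x^v\in I$ for some nonzero $\rho\in\Bbbk$. *)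

From HB Require Import structures.
From mathcomp Require Import all_boot all_order all_algebra.
From mathcomp Require Import fraction.
From mathcomp Require Import mpoly.
From Stdlib Require Import Relations.Relation_Operators.

Set Implicit Arguments.
Unset Strict Implicit.
Unset Printing Implicit Defensive.

Import Order.TTheory GRing.Theory Num.Theory.
Local Open Scope ring_scope.

(* The Laurent-type ring k[P] = k[x_j^{+-1} | j notin tau][x_i | i in tau]
   is realised as a subring of the fraction field of k[x]. *)

Notation "x %:F" := (@FracField.tofrac _ x) (at level 1, format "x %:F") : ring_scope.

Section Defs.
Variables (K : fieldType) (n m : nat).

Local Notation poly := {mpoly K[n]}.
Local Notation frac := {fraction poly}.

Definition vpos (mu : 'cV[int]_n) (i : 'I_n) : nat := absz (Num.max (mu i 0) 0).
Definition vneg (mu : 'cV[int]_n) (i : 'I_n) : nat := absz (Num.max (- mu i 0) 0).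

Definition xmon (a : 'I_n -> nat) : poly := \prod_(i < n) 'X_i ^+ a i.

Definition binom (mu : 'cV[int]_n) : poly := xmon (vpos mu) - xmon (vneg mu).

Definition in_IM (M : 'M[int]_(n, m)) (f : poly) : Prop :=
  exists a : 'I_m -> poly, f = \sum_(j < m) a j * binom (col j M).

Definition lmon (u : 'cV[int]_n) : frac := \prod_(i < n) ('X_i)%:F ^ (u i 0).

Definition inP (tau : {set 'I_n}) (u : 'cV[int]_n) : Prop :=
  forall i, i \in tau -> 0 <= u i 0.

Definition in_kP (tau : {set 'I_n}) (f : frac) : Prop :=
  exists (p : poly) (c : 'I_n -> nat),
    (forall i, i \in tau -> c i = 0%N) /\ f = p%:F / (xmon c)%:F.

Definition in_ext (tau : {set 'I_n}) (M : 'M[int]_(n, m)) (f : frac) : Prop :=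
  exists s : seq (frac * poly),
    (forall q, q \in s -> in_kP tau q.1 /\ in_IM M q.2) /\
    f = \sum_(q <- s) q.1 * (q.2)%:F.

Definition scrG_edge (tau : {set 'I_n}) (M : 'M[int]_(n, m)) (u v : 'cV[int]_n) : Prop :=
  inP tau u /\ inP tau v /\
  exists rho : K, rho != 0 /\ in_ext tau M (lmon u - rho%:MP%:F * lmon v).

Definition GP_edge (tau : {set 'I_n}) (M : 'M[int]_(n, m)) (u v : 'cV[int]_n) : Prop :=
  inP tau u /\ inP tau v /\
  exists j : 'I_m, u - v = col j M \/ v - u = col j M.

Definition connected (E : 'cV[int]_n -> 'cV[int]_n -> Prop) (u v : 'cV[int]_n) : Prop :=
  clos_refl_sym_trans _ E u v.

End Defs.

(* Columns give edges of 𝒢_P directly: x^u - x^v is the Laurent monomial x^(u - μ+) times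
   the binomial of μ = u - v.  Conversely, clearing denominators in an edge
   x^u - ρ x^v ∈ k[P]·I(M) yields a binomial x^α - ρ x^β ∈ I(M) whose exponents are u and v
   shifted by a common vector vanishing on τ.  Weight a monomial by 1 if its shifted-back
   exponent lies in the G_P(M)-component of u and by 0 otherwise; the induced linear form
   kills I(M), because h·(x^μ+ - x^μ-) pairs monomials whose exponents are adjacent in G_P(M).
   Evaluating it on x^α - ρ x^β gives 1 - ρ·[v in the component of u] = 0. *)
From HB Require Import structures.
From mathcomp Require Import all_boot all_order all_algebra.
From mathcomp Require Import fraction.
From mathcomp Require Import mpoly.
From mathcomp Require Import zify.
From Stdlib Require Import Relations.Relation_Operators ClassicalEpsilon.
Set Implicit Arguments.
Unset Strict Implicit.
Unset Printing Implicit Defensive.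

Import Order.TTheory GRing.Theory Num.Theory.
Local Open Scope ring_scope.

Section WeightedCoefficientSum.
Variables (R : comNzRingType) (n : nat) (w : 'X_{1..n} -> R).

Definition mwsum (p : {mpoly R[n]}) : R := \sum_(k <- msupp p) p@_k * w k.

Lemma mwsumE (s : seq 'X_{1..n}) p : uniq s -> {subset msupp p <= s} ->
  mwsum p = \sum_(k <- s) p@_k * w k.
Proof.
move=> s_uniq supp_s; rewrite [RHS](bigID (mem (msupp p))) /=.
rewrite [X in _ + X]big1 ?addr0 => [|k]; last by move/memN_msupp_eq0 ->; rewrite mul0r.
rewrite -big_filter; apply/esym/perm_big/uniq_perm; rewrite ?filter_uniq ?msupp_uniq //.
by move=> k; rewrite mem_filter andb_idr // => /supp_s.
Qed.

Lemma mwsum_is_scalar : scalar mwsum.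
Proof.
move=> a p q; pose s := undup (msupp p ++ msupp q ++ msupp (a *: p + q)).
have sub r : r \in [:: p; q; a *: p + q] -> {subset msupp r <= s}.
  by rewrite !inE => /or3P[] /eqP-> k k_supp; rewrite mem_undup !mem_cat k_supp ?orbT.
rewrite !(mwsumE (undup_uniq _ : uniq s)); try by apply: sub; rewrite !inE eqxx ?orbT.
rewrite big_distrr -big_split; apply: eq_bigr => k _.
by rewrite mcoeffD mcoeffZ mulrDl -mulrA.
Qed.

HB.instance Definition _ :=
  GRing.isLinear.Build R {mpoly R[n]} R *%R mwsum mwsum_is_scalar.

Lemma mwsumX k : mwsum 'X_[k] = w k.
Proof. by rewrite /mwsum msuppX big_seq1 mcoeffX eqxx mul1r. Qed.

Lemma mwsum_mulXB (a b : 'X_{1..n}) (h : {mpoly R[n]}) :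
  (forall k, w (k + a)%MM = w (k + b)%MM) -> mwsum (h * ('X_[a] - 'X_[b])) = 0.
Proof.
move=> wab; rewrite {1}(mpolyE h) mulr_suml linear_sum big1 // => k _.
by rewrite -scalerAl linearZ /= mulrBr -!mpolyXD linearB /= !mwsumX wab subrr mulr0.
Qed.

End WeightedCoefficientSum.

Lemma connected_mono (n : nat) (E1 E2 : 'cV[int]_n -> 'cV[int]_n -> Prop) :
  (forall x y, E1 x y -> connected E2 x y) ->
  forall x y, connected E1 x y -> connected E2 x y.
Proof.
move=> sub x y; elim=> [? ? /sub // | ? | ? ? _ | ? ? ? _ ? _].
- exact: rst_refl.
- exact: rst_sym.
- exact: rst_trans.
Qed.

Section LaurentMonomials.
Variables (K : fieldType) (n : nat).
Local Notation poly := {mpoly K[n]}.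
Local Notation frac := {fraction poly}.

Definition lprod (z : 'I_n -> int) : frac := \prod_(i < n) ('X_i : poly)%:F ^ z i.

Lemma mpolyX_neq0 (k : 'X_{1..n}) : 'X_[k] != 0 :> poly.
Proof. by rewrite -msupp_eq0 msuppX. Qed.

Lemma tofracX1_neq0 i : ('X_i : poly)%:F != 0.
Proof. by rewrite tofrac_eq0 mpolyX_neq0. Qed.

Lemma lmonE (u : 'cV[int]_n) : lmon K u = lprod (fun i => u i 0).
Proof. by []. Qed.

Lemma lprodD (z1 z2 : 'I_n -> int) :
  lprod (fun i => z1 i + z2 i) = lprod z1 * lprod z2.
Proof. by rewrite -big_split; apply: eq_bigr => i _; rewrite expfzDr ?tofracX1_neq0. Qed.

Lemma eq_lprod (z1 z2 : 'I_n -> int) : z1 =1 z2 -> lprod z1 = lprod z2.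
Proof. by move=> eq_z; apply: eq_bigr => i _; rewrite eq_z. Qed.

Lemma lprod_nat (a : 'I_n -> nat) : lprod (fun i => (a i)%:Z) = (xmon K a)%:F.
Proof. by rewrite /xmon rmorph_prod; apply: eq_bigr => i _; rewrite rmorphXn. Qed.

Lemma xmonD (a b : 'I_n -> nat) :
  xmon K (fun i => a i + b i)%N = xmon K a * xmon K b.
Proof. by rewrite /xmon -big_split; apply: eq_bigr => i _; rewrite exprD. Qed.

Lemma xmonE (a : 'I_n -> nat) : xmon K a = 'X_[[multinom a i | i < n]].
Proof. by rewrite mpolyXE_id; apply: eq_bigr => i _; rewrite mnmE. Qed.

Lemma tofrac_xmon_neq0 (a : 'I_n -> nat) : (xmon K a)%:F != 0.
Proof. by rewrite tofrac_eq0 xmonE mpolyX_neq0. Qed.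

Lemma lprod_divE (z : 'I_n -> int) :
  lprod z = (xmon K (fun i => absz (Num.max (z i) 0)))%:F /
            (xmon K (fun i => absz (Num.max (- z i) 0)))%:F.
Proof.
apply: (mulIf (tofrac_xmon_neq0 (fun i => absz (Num.max (- z i) 0)))).
rewrite divfK ?tofrac_xmon_neq0 // -!lprod_nat -lprodD; apply: eq_lprod => i; lia.
Qed.

End LaurentMonomials.

Section BinomialEdges.
Variables (K : fieldType) (n m : nat) (M : 'M[int]_(n, m)) (tau : {set 'I_n}).
Local Notation poly := {mpoly K[n]}.
Local Notation frac := {fraction poly}.

Lemma in_IM_add (f g : poly) : in_IM M f -> in_IM M g -> in_IM M (f + g).
Proof.
move=> [a ->] [b ->]; exists (fun j => a j + b j).
by rewrite -big_split; apply: eq_bigr => j _; rewrite mulrDl.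
Qed.

Lemma in_IM_mull (h g : poly) : in_IM M g -> in_IM M (h * g).
Proof.
move=> [a ->]; exists (fun j => h * a j).
by rewrite mulr_sumr; apply: eq_bigr => j _; rewrite mulrA.
Qed.

Lemma in_IM_binom j : in_IM M (binom K (col j M)).
Proof.
exists (fun j' => (j' == j)%:R); rewrite (bigD1 j) //= eqxx mul1r big1 ?addr0 //.
by move=> j' /negbTE ->; rewrite mul0r.
Qed.

Lemma in_ext_clear_denominators (f : frac) : in_ext tau M f ->
  exists2 D : 'I_n -> nat, (forall i, i \in tau -> D i = 0%N) &
  exists2 G, in_IM M G & (xmon K D)%:F * f = G%:F.
Proof.
case=> s [s_gen ->] {f}; elim: s s_gen => [_ | q s IHs s_gen].
  exists (fun _ => 0%N) => //; exists 0; last by rewrite big_nil mulr0 rmorph0.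
  by exists (fun _ => 0); rewrite big1 // => j _; rewrite mul0r.
have [[p [c [c_tau q1E]]] q2_IM] := s_gen q (mem_head _ _).
have [D D_tau [G G_IM DsG]] := IHs (fun q' q's => s_gen q' (mem_behead (s := q :: s) q's)).
exists (fun i => D i + c i)%N => [i i_tau | ]; first by rewrite D_tau ?c_tau.
exists (xmon K D * p * q.2 + xmon K c * G); first by apply: in_IM_add; apply: in_IM_mull.
rewrite big_cons q1E xmonD !rmorphD !rmorphM /= -DsG mulrDr -!mulrA; congr (_ + _).
  by congr (_ * _); rewrite mulrCA mulVKf ?tofrac_xmon_neq0.
by rewrite mulrCA.
Qed.

Definition unshift (E : 'I_n -> nat) (k : 'X_{1..n}) : 'cV[int]_n :=
  \col_i ((k i)%:Z - (E i)%:Z).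

Definition shift (E : 'I_n -> nat) (u : 'cV[int]_n) : 'I_n -> nat :=
  fun i => absz (u i 0 + (E i)%:Z).

Lemma unshiftK (E : 'I_n -> nat) (u : 'cV[int]_n) :
  (forall i, 0 <= u i 0 + (E i)%:Z) -> unshift E [multinom shift E u i | i < n] = u.
Proof.
move=> uE_ge0; apply/matrixP => i j.
by rewrite ord1 !mxE mnmE /shift; have := uE_ge0 i; lia.
Qed.

Lemma lmon_shift (E : 'I_n -> nat) (u : 'cV[int]_n) :
  (forall i, 0 <= u i 0 + (E i)%:Z) -> (xmon K E)%:F * lmon K u = (xmon K (shift E u))%:F.
Proof.
move=> uE_ge0; rewrite -!lprod_nat lmonE -lprodD.
by apply: eq_lprod => i; rewrite /shift; have := uE_ge0 i; lia.
Qed.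

Lemma unshift_edge {E : 'I_n -> nat} (k : 'X_{1..n}) (j : 'I_m) :
  (forall i, i \in tau -> E i = 0%N) ->
  GP_edge tau M (unshift E (k + [multinom vpos (col j M) i | i < n]))%MM
                (unshift E (k + [multinom vneg (col j M) i | i < n]))%MM.
Proof.
move=> E_tau; split; [|split] => [i i_tau|i i_tau|]; rewrite ?mxE ?E_tau ?subr0 //.
exists j; left; apply/matrixP => i j0.
by rewrite ord1 !mxE !mnmDE !mnmE /vpos /vneg !mxE; lia.
Qed.

Definition component_weight (E : 'I_n -> nat) (u : 'cV[int]_n) (k : 'X_{1..n}) : K :=
  if excluded_middle_informative (connected (GP_edge tau M) u (unshift E k)) then 1 else 0.

Lemma component_weight_connected (E : 'I_n -> nat) (u : 'cV[int]_n) (k : 'X_{1..n}) :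
  component_weight E u k != 0 -> connected (GP_edge tau M) u (unshift E k).
Proof.
by rewrite /component_weight; case: excluded_middle_informative => [conn _ | _] //=; rewrite eqxx.
Qed.

Lemma component_weight_self (E : 'I_n -> nat) (k : 'X_{1..n}) :
  component_weight E (unshift E k) k = 1.
Proof.
rewrite /component_weight; case: excluded_middle_informative => // not_conn.
by case: not_conn; apply: rst_refl.
Qed.

Lemma in_IM_binomial_connected (E : 'I_n -> nat) (a b : 'X_{1..n}) (rho : K) :
  (forall i, i \in tau -> E i = 0%N) -> rho != 0 ->
  in_IM M ('X_[a] - rho *: 'X_[b]) ->
  connected (GP_edge tau M) (unshift E a) (unshift E b).
Proof.
move=> E_tau rho_neq0 [c binom_sum].
pose w := component_weight E (unshift E a).
have w_inv j k : w (k + [multinom vpos (col j M) i | i < n])%MM =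
                 w (k + [multinom vneg (col j M) i | i < n])%MM.
  have edge := unshift_edge k j E_tau.
  rewrite /w /component_weight.
  case: excluded_middle_informative => conn_pos;
    case: excluded_middle_informative => conn_neg //; [case: conn_neg | case: conn_pos].
  - exact: rst_trans conn_pos (rst_step _ _ _ _ edge).
  - exact: rst_trans conn_neg (rst_sym _ _ _ _ (rst_step _ _ _ _ edge)).
have := congr1 (mwsum w) binom_sum; rewrite linear_sum big1 => [|j _]; last first.
  by rewrite /binom !xmonE; apply: mwsum_mulXB.
rewrite linearB linearZ /= !mwsumX /w component_weight_self => /eqP.
rewrite subr_eq0 => /eqP one_eq; apply: component_weight_connected.
have : rho * component_weight E (unshift E a) b != 0 by rewrite -one_eq oner_neq0.
by rewrite mulf_eq0 negb_or => /andP[].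
Qed.

Lemma scrG_edge_connected u v : scrG_edge K tau M u v -> connected (GP_edge tau M) u v.
Proof.
case=> u_P [v_P [rho [rho_neq0 ext_uv]]].
have [D D_tau [G G_IM DG]] := in_ext_clear_denominators ext_uv.
pose E i := (vneg u i + vneg v i + D i)%N.
have E_tau i : i \in tau -> E i = 0%N.
  by move=> i_tau; rewrite /E D_tau // /vneg; have := u_P i i_tau; have := v_P i i_tau; lia.
have uE_ge0 i : 0 <= u i 0 + (E i)%:Z by rewrite /E /vneg; lia.
have vE_ge0 i : 0 <= v i 0 + (E i)%:Z by rewrite /E /vneg; lia.
rewrite -(unshiftK uE_ge0) -(unshiftK vE_ge0).
apply: (in_IM_binomial_connected E_tau rho_neq0); rewrite -!xmonE.
have -> : xmon K (shift E u) - rho *: xmon K (shift E v) =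
          xmon K (fun i => vneg u i + vneg v i)%N * G.
  apply/eqP; rewrite -tofrac_eq -mul_mpolyC rmorphB !rmorphM /=.
  rewrite -(lmon_shift uE_ge0) -(lmon_shift vE_ge0) mulrCA -mulrBr.
  by rewrite /E xmonD rmorphM -mulrA DG.
exact: in_IM_mull.
Qed.

Lemma column_scrG_edge u v j : inP tau u -> inP tau v -> u - v = col j M ->
  scrG_edge K tau M u v.
Proof.
move=> u_P v_P uv_col.
have uv_col_i i : u i 0 - v i 0 = M i j.
  by have := congr1 (fun x : 'cV[int]_n => x i 0) uv_col; rewrite !mxE.
pose z i := u i 0 - (vpos (col j M) i)%:Z.
split=> //; split=> //; exists 1; split; first exact: oner_neq0.
exists [:: (lprod K z, binom K (col j M))]; split.
  move=> q; rewrite mem_seq1 => /eqP -> /=; split; last exact: in_IM_binom.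
  rewrite lprod_divE; do 2 eexists; split; last by [].
  move=> i i_tau; rewrite /z /vpos !mxE.
  by have := u_P i i_tau; have := v_P i i_tau; have := uv_col_i i; lia.
rewrite big_seq1 /= mpolyC1 rmorph1 mul1r /binom rmorphB /= -!lprod_nat !lmonE.
rewrite mulrBr -!lprodD.
by congr (_ - _); apply: eq_lprod => i; rewrite /z /vpos /vneg !mxE; have := uv_col_i i; lia.
Qed.

End BinomialEdges.

Theorem lemma2p12 (K : fieldType) (n m : nat) (M : 'M[int]_(n, m))
    (hrank : \rank (map_mx (intr : int -> rat) M) = m)
    (tau : {set 'I_n}) (u v : 'cV[int]_n)
    (hu : inP tau u) (hv : inP tau v) :
  connected (scrG_edge K tau M) u v <-> connected (GP_edge tau M) u v.
Proof.
split; apply: connected_mono => a b; first exact: scrG_edge_connected.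
case=> a_P [b_P [j [ab_col | ba_col]]].
- exact: rst_step (column_scrG_edge K a_P b_P ab_col).
- exact: rst_sym _ _ _ _ (rst_step _ _ _ _ (column_scrG_edge K b_P a_P ba_col)).
Qed.
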